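(* Let $\Delta=\mathrm{conv}\{0,\,e_1+e_2,\,e_1+e_3,\,e_2+e_3\}\subset\mathbb{R}^3$, and let $\alpha,\beta,\gamma$ be real numbers with $\tfrac12\le\alpha,\beta,\gamma<1$ and $\alpha+\beta+\gamma=2$. Let $$\Lambda=\mathrm{span}_{\mathbb{Z}}\left\{\begin{pmatrix}-\alpha\\ \beta\\ \gamma\end{pmatrix},\begin{pmatrix}\alpha\\ -\beta\\ \gamma\end{pmatrix},\begin{pmatrix}\alpha\\ \beta\\ -\gamma\end{pmatrix}\right\}.$$ Then $\Delta$ is lattice complete with respect to $\Lambda$.
   Context: $e_1,e_2,e_3$ are the standard basis vectors of $\mathbb{R}^3$. For a $3$-dimensional lattice $\Lambda$ (discrete subgroup spanning $\mathbb{R}^3$) and a convex body $C$ (compact convex, non-empty interior): a segment $[a,b]$ is a lattice segment if $b-a$ is parallel to a nonzero vector of $\Lambda$, with lattice length $|b-a|/|v|$ where $v$ generates $\Lambda\cap\mathrm{span}\{b-a\}$ and is a positive multiple of $b-a$; $\mathrm{diam}_\Lambda(C)$ is the maximum lattice length of a lattice segment in $C$; $C$ is lattice complete if no convex body $C'\supsetneq C$ has $\mathrm{diam}_\Lambda(C')=\mathrm{diam}_\Lambda(C)$. *)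

From Stdlib Require Import Reals ZArith.
Open Scope R_scope.

Definition vec3 : Type := (R * R * R)%type.
Definition mk3 (x y z : R) : vec3 := (x, y, z).
Definition vx (v : vec3) : R := fst (fst v).
Definition vy (v : vec3) : R := snd (fst v).
Definition vz (v : vec3) : R := snd v.

Definition vadd (u v : vec3) : vec3 := mk3 (vx u + vx v) (vy u + vy v) (vz u + vz v).
Definition vsub (u v : vec3) : vec3 := mk3 (vx u - vx v) (vy u - vy v) (vz u - vz v).
Definition vscale (t : R) (v : vec3) : vec3 := mk3 (t * vx v) (t * vy v) (t * vz v).
Definition vzero : vec3 := mk3 0 0 0.
Definition vnorm (v : vec3) : R := sqrt (vx v * vx v + vy v * vy v + vz v * vz v).
Definition vdist (u v : vec3) : R := vnorm (vsub u v).

Definition e1 : vec3 := mk3 1 0 0.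
Definition e2 : vec3 := mk3 0 1 0.
Definition e3 : vec3 := mk3 0 0 1.

Definition vset := vec3 -> Prop.

Definition convex (C : vset) : Prop :=
  forall x y t, C x -> C y -> 0 <= t <= 1 ->
    C (vadd (vscale (1 - t) x) (vscale t y)).
Definition closed_set (C : vset) : Prop :=
  forall x, (forall r, 0 < r -> exists y, C y /\ vdist x y < r) -> C x.
Definition bounded_set (C : vset) : Prop :=
  exists M, forall x, C x -> vnorm x <= M.
Definition has_interior_point (C : vset) : Prop :=
  exists x r, 0 < r /\ forall y, vdist x y < r -> C y.
(* convex body: compact (closed and bounded in R^3), convex, non-empty interior *)
Definition convex_body (C : vset) : Prop :=
  convex C /\ closed_set C /\ bounded_set C /\ has_interior_point C.

Definition Zspan3 (u v w : vec3) : vset :=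
  fun x => exists a b c : Z,
    x = vadd (vscale (IZR a) u) (vadd (vscale (IZR b) v) (vscale (IZR c) w)).

Definition primitive (L : vset) (v : vec3) : Prop :=
  L v /\ v <> vzero /\
  forall (s : R), L (vscale s v) -> exists k : Z, s = IZR k.

(* [a,b] is a lattice segment of lattice length t (a <> b):
   b - a = t v with v the positive generator of L ∩ span{b-a},
   so that t = |b-a|/|v|. *)
Definition lattice_seg_len (L : vset) (a b : vec3) (t : R) : Prop :=
  exists v, primitive L v /\ 0 < t /\ vsub b a = vscale t v.

(* d is the lattice diameter of C: the maximum lattice length of a lattice
   segment contained in C (C convex, so [a,b] ⊆ C iff a,b ∈ C). *)
Definition lattice_diam_is (L : vset) (C : vset) (d : R) : Prop :=
  (exists a b, C a /\ C b /\ lattice_seg_len L a b d) /\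
  (forall a b t, C a -> C b -> lattice_seg_len L a b t -> t <= d).

Definition lattice_complete (L : vset) (C : vset) : Prop :=
  forall C' : vset, convex_body C' ->
    (forall x, C x -> C' x) -> (exists x, C' x /\ ~ C x) ->
    ~ (exists d, lattice_diam_is L C d /\ lattice_diam_is L C' d).

Definition conv4 (p1 p2 p3 p4 : vec3) : vset :=
  fun x => exists l1 l2 l3 l4 : R,
    0 <= l1 /\ 0 <= l2 /\ 0 <= l3 /\ 0 <= l4 /\ l1 + l2 + l3 + l4 = 1 /\
    x = vadd (vscale l1 p1) (vadd (vscale l2 p2) (vadd (vscale l3 p3) (vscale l4 p4))).

Definition Delta3 : vset := conv4 vzero (vadd e1 e2) (vadd e1 e3) (vadd e2 e3).

Definition Lam (al be ga : R) : vset :=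
  Zspan3 (mk3 (- al) be ga) (mk3 al (- be) ga) (mk3 al be (- ga)).

From Pilot Require Import Defs.
From Stdlib Require Import Reals ZArith Lra Lia Classical.
Open Scope R_scope.

(* [Delta3] is the set where the four affine forms [bary k] (twice the
   barycentric coordinates) are nonnegative.  A nonzero vector of the lattice
   is (al p, be q, ga r) with integers p, q, r of equal parity.  Either some
   |p| >= 2, and the segment already overshoots the unit cube containing
   [Delta3]; or p, q, r = ±1, and then the form ±x ±y ±z takes the value 2 on
   the vector while varying by at most 2 over [Delta3].  So every lattice
   segment in [Delta3] has length at most 1.  Conversely, if a convex body
   contains [Delta3] and a point x with [bary k x < 0], the primitive vector
   from [vertex k] to an interior point of the opposite facet can be prolonged
   slightly beyond that facet inside conv(Delta3 ∪ {x}), which yields a lattice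
   segment of length > 1. *)

Ltac unfold_vec := unfold vadd, vsub, vscale, vzero, e1, e2, e3, mk3, vx, vy, vz; cbn [fst snd].

Lemma vec3_eq (u w : vec3) : vx u = vx w -> vy u = vy w -> vz u = vz w -> u = w.
Proof.
  destruct u as [[u1 u2] u3], w as [[w1 w2] w3]; unfold_vec.
  intros -> -> ->; reflexivity.
Qed.

Inductive corner : Set := V0 | V12 | V13 | V23.

Definition corner_eq_dec (j k : corner) : {j = k} + {j <> k}.
Proof. decide equality. Defined.

Definition vertex (k : corner) : vec3 :=
  match k with
  | V0 => vzero
  | V12 => vadd e1 e2
  | V13 => vadd e1 e3
  | V23 => vadd e2 e3
  end.

Definition bary (k : corner) (u : vec3) : R :=
  match k with
  | V0 => 2 - (vx u + vy u + vz u)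
  | V12 => vx u + vy u - vz u
  | V13 => vx u - vy u + vz u
  | V23 => - vx u + vy u + vz u
  end.

Lemma bary_affine k u w s :
  bary k (vadd (vscale (1 - s) u) (vscale s w)) = (1 - s) * bary k u + s * bary k w.
Proof. destruct k; unfold bary; unfold_vec; ring. Qed.

Lemma Delta3_iff y : Delta3 y <-> forall k, 0 <= bary k y.
Proof.
  split.
  - intros (l1 & l2 & l3 & l4 & H1 & H2 & H3 & H4 & Hs & ->) k.
    destruct k; unfold bary; unfold_vec; lra.
  - intros Hy.
    exists (bary V0 y / 2), (bary V12 y / 2), (bary V13 y / 2), (bary V23 y / 2).
    pose proof (Hy V0); pose proof (Hy V12); pose proof (Hy V13); pose proof (Hy V23).
    unfold bary in *; repeat split; try lra.
    apply vec3_eq; unfold_vec; lra.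
Qed.

Lemma Delta3_bary_ge0 y : Delta3 y ->
  0 <= bary V0 y /\ 0 <= bary V12 y /\ 0 <= bary V13 y /\ 0 <= bary V23 y.
Proof. rewrite Delta3_iff; auto. Qed.

Lemma bary_neg_of_not_Delta3 y : ~ Delta3 y -> exists k, bary k y < 0.
Proof.
  rewrite Delta3_iff; intros Hy.
  destruct (not_all_ex_not _ _ Hy) as [k Hk].
  exists k; lra.
Qed.

Lemma vertex_in_Delta3 k : Delta3 (vertex k).
Proof. apply Delta3_iff; intros j; destruct j, k; simpl; unfold_vec; lra. Qed.

Lemma Delta3_coords u : Delta3 u -> 0 <= vx u <= 1 /\ 0 <= vy u <= 1 /\ 0 <= vz u <= 1.
Proof. intros Hu; destruct (Delta3_bary_ge0 _ Hu) as (? & ? & ? & ?); unfold bary in *; lra. Qed.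

Lemma Delta3_sign_form_diff a b (s1 s2 s3 : R) : Delta3 a -> Delta3 b ->
  (s1 = 1 \/ s1 = -1) -> (s2 = 1 \/ s2 = -1) -> (s3 = 1 \/ s3 = -1) ->
  s1 * (vx b - vx a) + s2 * (vy b - vy a) + s3 * (vz b - vz a) <= 2.
Proof.
  intros Ha Hb Hs1 Hs2 Hs3.
  destruct (Delta3_bary_ge0 _ Ha) as (? & ? & ? & ?), (Delta3_bary_ge0 _ Hb) as (? & ? & ? & ?).
  unfold bary in *.
  destruct Hs1 as [-> | ->], Hs2 as [-> | ->], Hs3 as [-> | ->]; lra.
Qed.

Lemma scale_le1_of_large_coeff t c (p : Z) : 0 < t -> 1/2 <= c -> (2 <= Z.abs p)%Z ->
  Rabs (t * (c * IZR p)) <= 1 -> t <= 1.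
Proof.
  intros t_pos c_ge p_ge H.
  rewrite !Rabs_mult, Rabs_Zabs, (Rabs_pos_eq t), (Rabs_pos_eq c) in H by lra.
  apply IZR_le in p_ge.
  assert (1 <= c * IZR (Z.abs p)) by nra.
  nra.
Qed.

Lemma small_equal_parity_coeffs (i j k : Z) :
  (Z.abs (- i + j + k) <= 1)%Z -> (Z.abs (i - j + k) <= 1)%Z -> (Z.abs (i + j - k) <= 1)%Z ->
  (i = 0 /\ j = 0 /\ k = 0)%Z \/
  ((- i + j + k = 1 \/ - i + j + k = -1) /\ (i - j + k = 1 \/ i - j + k = -1) /\
   (i + j - k = 1 \/ i + j - k = -1))%Z.
Proof. lia. Qed.

Section Lattice.
Variables al be ga : R.

Lemma Lam_coords v : Lam al be ga v -> exists i j k : Z,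
  v = mk3 (al * IZR (- i + j + k)) (be * IZR (i - j + k)) (ga * IZR (i + j - k)).
Proof.
  intros (i & j & k & ->); exists i, j, k.
  apply vec3_eq; unfold_vec;
    repeat (rewrite plus_IZR || rewrite minus_IZR || rewrite opp_IZR); ring.
Qed.

(* Qualified because [Reals] exports an unrelated [primitive]. *)
Lemma Lam_primitive v : al <> 0 -> Lam al be ga v -> (vx v = al \/ vx v = - al) ->
  Defs.primitive (Lam al be ga) v.
Proof.
  intros al_nz Lv Hvx; split; [exact Lv | split].
  - intros ->; unfold vx, vzero, mk3 in Hvx; simpl in Hvx; lra.
  - intros s Ls.
    destruct (Lam_coords _ Ls) as (i & j & k & Hs).
    apply (f_equal vx) in Hs.
    change (vx (vscale s v)) with (s * vx v) in Hs.
    change (vx (mk3 _ _ _)) with (al * IZR (- i + j + k)) in Hs.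
    destruct Hvx as [E | E]; rewrite E in Hs.
    + exists (- i + j + k)%Z; apply (Rmult_eq_reg_l al); lra.
    + exists (- (- i + j + k))%Z; rewrite opp_IZR; apply (Rmult_eq_reg_l al); lra.
Qed.

(* [vadd (vertex k) (dir k)] lies in the relative interior of the facet
   opposite [vertex k]. *)
Definition dir (k : corner) : vec3 :=
  match k with
  | V0 => mk3 al be ga
  | V12 => mk3 (- al) (- be) ga
  | V13 => mk3 (- al) be (- ga)
  | V23 => mk3 al (- be) (- ga)
  end.

Lemma dir_primitive k : al <> 0 -> Defs.primitive (Lam al be ga) (dir k).
Proof.
  intros al_nz; apply Lam_primitive; [exact al_nz | |].
  - destruct k;
      [exists 1%Z, 1%Z, 1%Z | exists 0%Z, 0%Z, (-1)%Z
      | exists 0%Z, (-1)%Z, 0%Z | exists (-1)%Z, 0%Z, 0%Z];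
      apply vec3_eq; unfold dir; unfold_vec; ring.
  - destruct k; [left | right | right | left]; reflexivity.
Qed.

Hypotheses (al_range : 1/2 <= al < 1) (be_range : 1/2 <= be < 1)
  (ga_range : 1/2 <= ga < 1) (sum_eq2 : al + be + ga = 2).

Lemma Delta3_lattice_len_le1 a b t :
  Delta3 a -> Delta3 b -> lattice_seg_len (Lam al be ga) a b t -> t <= 1.
Proof.
  intros Ha Hb (v & (Lv & v_nz & _) & t_pos & Eab).
  destruct (Lam_coords _ Lv) as (i & j & k & Ev); subst v.
  assert (Ex : vx b - vx a = t * (al * IZR (- i + j + k))) by exact (f_equal vx Eab).
  assert (Ey : vy b - vy a = t * (be * IZR (i - j + k))) by exact (f_equal vy Eab).
  assert (Ez : vz b - vz a = t * (ga * IZR (i + j - k))) by exact (f_equal vz Eab).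
  destruct (Delta3_coords _ Ha) as (? & ? & ?), (Delta3_coords _ Hb) as (? & ? & ?).
  destruct (Z_le_gt_dec 2 (Z.abs (- i + j + k))) as [p_large | p_small].
  { apply (scale_le1_of_large_coeff t al _ t_pos (proj1 al_range) p_large).
    rewrite <- Ex; apply Rabs_le; lra. }
  destruct (Z_le_gt_dec 2 (Z.abs (i - j + k))) as [q_large | q_small].
  { apply (scale_le1_of_large_coeff t be _ t_pos (proj1 be_range) q_large).
    rewrite <- Ey; apply Rabs_le; lra. }
  destruct (Z_le_gt_dec 2 (Z.abs (i + j - k))) as [r_large | r_small].
  { apply (scale_le1_of_large_coeff t ga _ t_pos (proj1 ga_range) r_large).
    rewrite <- Ez; apply Rabs_le; lra. }
  destruct (small_equal_parity_coeffs i j k) as [(-> & -> & ->) | (Sp & Sq & Sr)]; try lia.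
  - exfalso; apply v_nz, vec3_eq; unfold_vec; simpl; ring.
  - assert (sign_of_odd : forall n : Z, (n = 1 \/ n = -1)%Z -> IZR n = 1 \/ IZR n = -1)
      by (intros n [-> | ->]; auto).
    pose proof (Delta3_sign_form_diff _ _ _ _ _ Ha Hb (sign_of_odd _ Sp) (sign_of_odd _ Sq)
      (sign_of_odd _ Sr)) as Hform.
    rewrite Ex, Ey, Ez in Hform.
    replace ga with (2 - al - be) in Hform by lra.
    destruct (sign_of_odd _ Sp) as [Ep | Ep], (sign_of_odd _ Sq) as [Eq | Eq],
      (sign_of_odd _ Sr) as [Er | Er]; rewrite Ep, Eq, Er in Hform; lra.
Qed.

Lemma bary_along_dir k t : bary k (vadd (vertex k) (vscale t (dir k))) = 2 * (1 - t).
Proof. destruct k; simpl; unfold_vec; replace ga with (2 - al - be) by lra; ring. Qed.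

Definition margin : R := 2 - 2 * Rmax al (Rmax be ga).

Lemma margin_pos : 0 < margin.
Proof.
  unfold margin.
  assert (Rmax al (Rmax be ga) < 1) by (repeat apply Rmax_lub_lt; lra).
  lra.
Qed.

Lemma bary_along_dir_other j k t : j <> k -> 0 <= t ->
  t * margin <= bary j (vadd (vertex k) (vscale t (dir k))).
Proof.
  intros jk t_ge0.
  assert (Ma : margin <= 2 - 2 * al) by (unfold margin; pose proof (Rmax_l al (Rmax be ga)); lra).
  assert (Mb : margin <= 2 - 2 * be)
    by (unfold margin; pose proof (Rmax_l be ga); pose proof (Rmax_r al (Rmax be ga)); lra).
  assert (Mg : margin <= 2 - 2 * ga)
    by (unfold margin; pose proof (Rmax_r be ga); pose proof (Rmax_r al (Rmax be ga)); lra).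
  destruct j, k; try congruence; simpl; unfold_vec; replace ga with (2 - al - be) in * by lra;
    nra.
Qed.

Section Extension.
Variables (C : vset) (x : vec3).
Hypotheses (C_convex : convex C) (Delta3_sub : forall y, Delta3 y -> C y) (Cx : C x).

Lemma lattice_segment_beyond_facet k : bary k x < 0 ->
  exists a b t, C a /\ C b /\ lattice_seg_len (Lam al be ga) a b t /\ 1 < t.
Proof.
  intros xk_neg.
  pose proof margin_pos as m_pos.
  set (N := 1 + Rabs (bary V0 x) + Rabs (bary V12 x) + Rabs (bary V13 x) + Rabs (bary V23 x)).
  assert (0 < N /\ forall j, bary j x <= N) as [N_pos bary_le_N].
  { pose proof (Rabs_pos (bary V0 x)); pose proof (Rabs_pos (bary V12 x));
    pose proof (Rabs_pos (bary V13 x)); pose proof (Rabs_pos (bary V23 x)).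
    split; [unfold N; lra |].
    intros j; pose proof (Rle_abs (bary j x)); unfold N; destruct j; lra. }
  set (lam := margin / (margin + N)).
  assert (lam_pos : 0 < lam) by (unfold lam; apply Rdiv_lt_0_compat; lra).
  assert (lam_eq : lam * (margin + N) = margin) by (unfold lam; field; lra).
  assert (lam_lt1 : lam < 1) by nra.
  assert (lamN : lam * N <= margin) by nra.
  (* [t] puts [y] on the hyperplane of the facet opposite [vertex k]. *)
  set (t := 1 - lam * bary k x / 2).
  assert (t_gt1 : 1 < t) by (unfold t; nra).
  set (b := vadd (vertex k) (vscale t (dir k))).
  set (y := vscale (/ (1 - lam)) (vsub b (vscale lam x))).
  assert (b_comb : b = vadd (vscale (1 - lam) y) (vscale lam x))
    by (apply vec3_eq; unfold y; unfold_vec; field; lra).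
  assert (y_in : Delta3 y).
  { apply Delta3_iff; intros j.
    pose proof (bary_affine j y x lam) as E; rewrite <- b_comb in E.
    apply (Rmult_le_reg_l (1 - lam)); [lra |].
    destruct (corner_eq_dec j k) as [-> | jk].
    - unfold b in E; rewrite bary_along_dir in E; unfold t in E; lra.
    - pose proof (bary_along_dir_other j k t jk ltac:(lra)) as Hj; fold b in Hj.
      pose proof (Rmult_le_compat_l lam _ _ (Rlt_le _ _ lam_pos) (bary_le_N j)).
      nra. }
  exists (vertex k), b, t; repeat split.
  - apply Delta3_sub, vertex_in_Delta3.
  - rewrite b_comb; apply C_convex; [apply Delta3_sub, y_in | exact Cx | lra].
  - exists (dir k); split; [apply dir_primitive; lra | split; [lra |]].
    apply vec3_eq; unfold b; unfold_vec; ring.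
  - exact t_gt1.
Qed.
End Extension.
End Lattice.

Theorem proposition4p10 (al be ga : R) :
  1/2 <= al < 1 -> 1/2 <= be < 1 -> 1/2 <= ga < 1 -> al + be + ga = 2 ->
  lattice_complete (Lam al be ga) Delta3.
Proof.
  intros Hal Hbe Hga Hsum C' [C'_convex _] Delta3_sub [x [C'x x_notin]]
    [d [[(a & b & Da & Db & ab_len) _] [_ C'_diam]]].
  pose proof (Delta3_lattice_len_le1 al be ga Hal Hbe Hga Hsum a b d Da Db ab_len).
  destruct (bary_neg_of_not_Delta3 x x_notin) as [k xk_neg].
  destruct (lattice_segment_beyond_facet al be ga Hal Hbe Hga Hsum C' x C'_convex Delta3_sub
    C'x k xk_neg) as (a' & b' & t & C'a & C'b & len & t_gt1).
  pose proof (C'_diam a' b' t C'a C'b len).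
  lra.
Qed.
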